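(* If $k>\ell\geq t+2$ and $n\geq\max\{2L(k,t),\ t+1+(k-t)(\ell-t)\}$, then $r_1(n,k,\ell,t)>r_1(n,\ell,k,t)$.
   Context: $S(n,k)$ is the Stirling number of the second kind, with $S(n,a)=0$ for $a\leq0$. $L(k,t)=(t+1)+(k-t+1)\log_2((t+1)(k-t+1))$. $r_1(n,k,\ell,t)=\Big(\sum_{j=1}^{\ell-t}(-1)^{j-1}\binom{\ell-t}{j}S(n-t-j,k-t-j)\Big)\big(S(n-t,\ell-t)+t\big)$. *)

From Stdlib Require Import Reals Lra Lia ZArith Arith List.
Import ListNotations.

Fixpoint stirling2 (n k : nat) : nat :=
  match n, k with
  | O, O => 1
  | O, S _ => 0
  | S _, O => 0
  | S n', S k' => S k' * stirling2 n' (S k') + stirling2 n' k'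
  end.

Definition S2 (n : nat) (a : Z) : Z :=
  if (a <=? 0)%Z then 0%Z else Z.of_nat (stirling2 n (Z.to_nat a)).

Fixpoint binom (n k : nat) : nat :=
  match n, k with
  | _, O => 1
  | O, S _ => 0
  | S n', S k' => binom n' k' + binom n' (S k')
  end.

Definition log2R (x : R) : R := (ln x / ln 2)%R.

Definition L (k t : nat) : R :=
  (IZR (Z.of_nat t + 1) + IZR (Z.of_nat k - Z.of_nat t + 1) *
     log2R (IZR ((Z.of_nat t + 1) * (Z.of_nat k - Z.of_nat t + 1))))%R.

Definition r1 (n k l t : nat) : Z :=
  (fold_right Z.add 0%Z
     (map (fun j : nat =>
             ((-1) ^ (Z.of_nat j - 1) * Z.of_nat (binom (l - t) j) *
              S2 (n - t - j) (Z.of_nat k - Z.of_nat t - Z.of_nat j))%Z)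
          (seq 1 (l - t))))
  * (S2 (n - t) (Z.of_nat l - Z.of_nat t) + Z.of_nat t).

(* Write a = k - t, b = l - t and M = n - t, so that b >= 2, a > b and M > ab.  The first factor
   of r1(n,k,l,t) counts the partitions of an M-set into a blocks in which one of b marked points
   is a singleton.  By the Bonferroni inequalities it is at least S(M-1,a-1), and at least
   b S(M-1,a-1) - C(b,2) S(M-2,a-2), while the first factor of r1(n,l,k,t) is at most
   a S(M-1,b-1).  Stirling numbers with neighbouring arguments are compared through ratios of
   powers, (a-1)^(M-1) S(M,a) <= a^(M-1) S(M-1,a-1) and
   S(M-1,b-1) (b^(M-1) - (b-1)^M) <= (b-1)^(M-1) S(M,b), and the resulting inequalities between
   powers follow from Bernoulli's inequality, separately for a >= 2b and a < 2b.  The summand t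
   is negligible because 10 M <= S(M,a). *)

From Stdlib Require Import Reals ZArith Arith Lia Lra List.

Section IntegerSums.
Local Open Scope Z_scope.

Definition zsum (s n : nat) (g : nat -> Z) : Z := fold_right Z.add 0 (map g (seq s n)).

Lemma zsum_S s n g : zsum s (S n) g = g s + zsum (S s) n g.
Proof. reflexivity. Qed.

Lemma zsum_last s n g : zsum s (S n) g = zsum s n g + g (s + n)%nat.
Proof.
  unfold zsum. rewrite seq_S, map_app, fold_right_app. cbn.
  generalize (map g (seq s n)). induction l as [|x l IH]; cbn; lia.
Qed.

Lemma zsum_shift s n g : zsum (S s) n g = zsum s n (fun j => g (S j)).
Proof. unfold zsum. rewrite <- seq_shift, map_map. reflexivity. Qed.

Lemma zsum_ext s n g h :
  (forall j, (s <= j < s + n)%nat -> g j = h j) -> zsum s n g = zsum s n h.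
Proof.
  revert s. induction n as [|n IH]; intros s Hgh; [reflexivity|].
  rewrite !zsum_S, (IH (S s)), Hgh; try lia; intros; apply Hgh; lia.
Qed.

Lemma zsum_le s n g h :
  (forall j, (s <= j < s + n)%nat -> g j <= h j) -> zsum s n g <= zsum s n h.
Proof.
  revert s. induction n as [|n IH]; intros s Hgh; cbn; [lia|].
  specialize (IH (S s) ltac:(intros; apply Hgh; lia)).
  specialize (Hgh s ltac:(lia)). unfold zsum in IH. lia.
Qed.

Lemma zsum_add s n g h : zsum s n (fun j => g j + h j) = zsum s n g + zsum s n h.
Proof. revert s. induction n; intros; [reflexivity|]. rewrite !zsum_S, IHn. ring. Qed.

Lemma zsum_scale s n x g : zsum s n (fun j => x * g j) = x * zsum s n g.
Proof. revert s. induction n; intros; cbn; [ring|]. unfold zsum in IHn. rewrite IHn. ring. Qed.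

Lemma zsum_const s n x : zsum s n (fun _ => x) = Z.of_nat n * x.
Proof. revert s. induction n; intros; [reflexivity|]. rewrite zsum_S, IHn. lia. Qed.

Lemma zsum_id n : 2 * zsum 0 n Z.of_nat = Z.of_nat n * (Z.of_nat n - 1).
Proof. induction n; [reflexivity|]. rewrite zsum_last. lia. Qed.

(* By Pascal's rule, [alt_sum d F] is [sum_(j <= d) (-1)^j C(d,j) F j]. *)
Fixpoint alt_sum (d : nat) (F : nat -> Z) : Z :=
  match d with
  | O => F O
  | S d' => alt_sum d' F - alt_sum d' (fun j => F (S j))
  end.

Lemma alt_sum_ext d F G :
  (forall j, (j <= d)%nat -> F j = G j) -> alt_sum d F = alt_sum d G.
Proof.
  revert F G. induction d as [|d IH]; intros F G HFG; cbn.
  - apply HFG; lia.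
  - rewrite (IH F G), (IH (fun j => F (S j)) (fun j => G (S j))); auto;
      intros; apply HFG; lia.
Qed.

Lemma alt_sum_linear d x F G :
  alt_sum d (fun j => x * F j + G j) = x * alt_sum d F + alt_sum d G.
Proof.
  revert F G. induction d as [|d IH]; intros; cbn; [reflexivity|].
  rewrite IH, (IH (fun j => F (S j)) (fun j => G (S j))). ring.
Qed.

Lemma alt_sum_0 d F : (forall j, F j = 0) -> alt_sum d F = 0.
Proof. revert F. induction d; intros F HF; cbn; [auto|]. rewrite !IHd; auto. Qed.

Lemma alt_sum_index_mul d H :
  alt_sum (S d) (fun j => Z.of_nat j * H j) = - Z.of_nat (S d) * alt_sum d (fun j => H (S j)).
Proof.
  revert H. induction d as [|d IH]; intros H; [cbn [alt_sum]; lia|].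
  change (alt_sum (S (S d)) (fun j => Z.of_nat j * H j)) with
    (alt_sum (S d) (fun j => Z.of_nat j * H j) - alt_sum (S d) (fun j => Z.of_nat (S j) * H (S j))).
  rewrite (alt_sum_ext (S d) (fun j => Z.of_nat (S j) * H (S j))
             (fun j => 1 * (Z.of_nat j * H (S j)) + H (S j))) by (intros; lia).
  rewrite alt_sum_linear, IH, (IH (fun j => H (S j))). cbn [alt_sum]. lia.
Qed.

Lemma binom_gt n k : (n < k)%nat -> binom n k = 0%nat.
Proof.
  revert k. induction n; intros k Hk; destruct k; cbn; try lia; auto.
  rewrite !IHn; lia.
Qed.

Definition binom_alt_sum (d : nat) (F : nat -> Z) : Z :=
  zsum 1 d (fun j => (-1) ^ (Z.of_nat j - 1) * Z.of_nat (binom d j) * F j).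

Lemma binom_alt_sum_S d F :
  binom_alt_sum (S d) F = binom_alt_sum d F + F 1%nat - binom_alt_sum d (fun j => F (S j)).
Proof.
  unfold binom_alt_sum. rewrite zsum_shift.
  rewrite (zsum_ext 0 (S d) _ (fun j => (-1) ^ Z.of_nat j * Z.of_nat (binom d j) * F (S j)
                         + (-1) ^ (Z.of_nat (S j) - 1) * Z.of_nat (binom d (S j)) * F (S j))).
  2:{ intros j _. replace (Z.of_nat (S j) - 1) with (Z.of_nat j) by lia. cbn [binom]. lia. }
  rewrite zsum_add, zsum_S, <- (zsum_shift 0 (S d) (fun j => _ * Z.of_nat (binom d j) * F j)).
  rewrite zsum_last, (binom_gt d (1 + d)) by lia.
  rewrite (zsum_ext 1 d (fun j => (-1) ^ Z.of_nat j * _ * _)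
             (fun j => -1 * ((-1) ^ (Z.of_nat j - 1) * Z.of_nat (binom d j) * F (S j)) + 0)).
  2:{ intros j Hj. replace (Z.of_nat j) with (Z.succ (Z.of_nat j - 1)) at 1 by lia.
      rewrite Z.pow_succ_r by lia. ring. }
  rewrite zsum_add, zsum_scale, zsum_const.
  replace (binom d 0) with 1%nat by (destruct d; reflexivity).
  change (Z.of_nat 1) with 1. change (Z.of_nat 0) with 0. ring.
Qed.

Lemma binom_alt_sum_eq d F : binom_alt_sum d F = F 0%nat - alt_sum d F.
Proof.
  revert F. induction d as [|d IH]; intros F; [cbn; lia|].
  rewrite binom_alt_sum_S, !IH. cbn [alt_sum]. lia.
Qed.

End IntegerSums.

Section SingletonCounts.
Local Open Scope Z_scope.

(* Unlike [S2], this vanishes only for [c < 0], so that the recurrence [stirZ_S] holds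
   everywhere. *)
Definition stirZ (n : nat) (c : Z) : Z :=
  if c <? 0 then 0 else Z.of_nat (stirling2 n (Z.to_nat c)).

Lemma stirZ_ge0 n c : 0 <= stirZ n c.
Proof. unfold stirZ; destruct (c <? 0); lia. Qed.

Lemma stirZ_neg n c : c < 0 -> stirZ n c = 0.
Proof. intros; unfold stirZ; destruct (Z.ltb_spec c 0); lia. Qed.

Lemma stirZ_of_nat n c : stirZ n (Z.of_nat c) = Z.of_nat (stirling2 n c).
Proof. unfold stirZ. destruct (Z.ltb_spec (Z.of_nat c) 0); [lia|]. now rewrite Nat2Z.id. Qed.

Lemma S2_stirZ n c : (1 <= n)%nat -> S2 n c = stirZ n c.
Proof.
  intros Hn. unfold S2, stirZ.
  destruct (Z.leb_spec c 0), (Z.ltb_spec c 0); try lia.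
  replace c with 0 by lia. destruct n; [lia|reflexivity].
Qed.

Lemma stirZ_S n c : stirZ (S n) c = c * stirZ n c + stirZ n (c - 1).
Proof.
  unfold stirZ. destruct (Z.ltb_spec c 0), (Z.ltb_spec (c - 1) 0); try lia.
  - replace c with 0 by lia. reflexivity.
  - replace c with (Z.of_nat (S (Z.to_nat (c - 1)))) by lia.
    replace (Z.of_nat (S (Z.to_nat (c - 1))) - 1) with (Z.of_nat (Z.to_nat (c - 1))) by lia.
    rewrite !Nat2Z.id. cbn [stirling2]. lia.
Qed.

(* By inclusion-exclusion, [nosingle M c d] counts the partitions of an [M]-set into [c]
   blocks in which none of [d] marked points forms a singleton block. *)
Definition nosingle (M : nat) (c : Z) (d : nat) : Z :=
  alt_sum d (fun j => stirZ (M - j) (c - Z.of_nat j)).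

Lemma nosingle_0 M c : nosingle M c 0 = stirZ M c.
Proof. unfold nosingle. cbn [alt_sum]. now rewrite Nat.sub_0_r, Z.sub_0_r. Qed.

Lemma nosingle_S M c d : nosingle M c (S d) = nosingle M c d - nosingle (M - 1) (c - 1) d.
Proof. unfold nosingle. cbn [alt_sum]. f_equal. apply alt_sum_ext. intros. f_equal; lia. Qed.

Lemma nosingle_neg M c d : c < 0 -> nosingle M c d = 0.
Proof. intros; unfold nosingle; apply alt_sum_0; intros; apply stirZ_neg; lia. Qed.

Lemma nosingle_split M c d : (d + 1 <= M)%nat ->
  nosingle M c d
  = c * nosingle (M - 1) c d + nosingle (M - 1) (c - 1) d
    + Z.of_nat d * nosingle (M - 2) (c - 1) (d - 1).
Proof.
  intros Hd. unfold nosingle.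
  rewrite (alt_sum_ext d _ (fun j => c * stirZ (M - 1 - j) (c - Z.of_nat j)
     + (-1 * (Z.of_nat j * stirZ (M - 1 - j) (c - Z.of_nat j))
        + stirZ (M - 1 - j) (c - 1 - Z.of_nat j)))).
  2:{ intros j Hj. replace (M - j)%nat with (S (M - 1 - j)) by lia. rewrite stirZ_S.
      replace (c - Z.of_nat j - 1) with (c - 1 - Z.of_nat j) by lia. ring. }
  rewrite !alt_sum_linear.
  destruct d as [|d]; [cbn; ring|].
  rewrite alt_sum_index_mul.
  rewrite (alt_sum_ext d (fun j => stirZ (M - 1 - S j) (c - Z.of_nat (S j)))
                         (fun j => stirZ (M - 2 - j) (c - 1 - Z.of_nat j)))
    by (intros; f_equal; lia).
  replace (S d - 1)%nat with d by lia. ring.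
Qed.

(* The first marked point either joins one of the [c] blocks of the other points or forms a
   pair with one of the other [d - 1] marked points. *)
Lemma nosingle_first M c d : (1 <= d <= M)%nat ->
  nosingle M c d
  = c * nosingle (M - 1) c (d - 1) + Z.of_nat (d - 1) * nosingle (M - 2) (c - 1) (d - 2).
Proof.
  intros Hd. destruct d as [|d]; [lia|].
  rewrite nosingle_S, (nosingle_split M c d) by lia.
  replace (S d - 1)%nat with d by lia. replace (S d - 2)%nat with (d - 1)%nat by lia. ring.
Qed.

Lemma nosingle_ge0 M c d : (d <= M)%nat -> 0 <= nosingle M c d.
Proof.
  revert c d. induction M as [M IH] using lt_wf_ind. intros c d Hd.
  destruct (Z.ltb_spec c 0); [rewrite nosingle_neg; lia|].
  destruct d as [|d]; [rewrite nosingle_0; apply stirZ_ge0|].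
  rewrite nosingle_first by lia.
  assert (0 <= nosingle (M - 1) c (S d - 1)) by (apply IH; lia).
  destruct d as [|d]; [change (Z.of_nat (1 - 1)) with 0; nia|].
  assert (0 <= nosingle (M - 2) (c - 1) (S (S d) - 2)) by (apply IH; lia). nia.
Qed.

(* Partitions in which some marked point is a singleton: the first factor of [r1]. *)
Definition with_singleton (M : nat) (c : Z) (d : nat) : Z := stirZ M c - nosingle M c d.

Lemma with_singleton_sum M c d :
  with_singleton M c d = zsum 0 d (fun i => nosingle (M - 1) (c - 1) i).
Proof.
  unfold with_singleton. induction d as [|d IH].
  - rewrite nosingle_0. cbn. lia.
  - rewrite nosingle_S, zsum_last. cbn [Nat.add]. lia.
Qed.

Lemma zsum_nosingle_ge0 M c s d : (s + d <= M)%nat ->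
  0 <= zsum s d (fun i => nosingle (M - 1) c i).
Proof.
  intros. apply Z.le_trans with (zsum s d (fun _ => 0)); [rewrite zsum_const; lia|].
  apply zsum_le. intros; apply nosingle_ge0; lia.
Qed.

Lemma with_singleton_ge0 M c d : (d <= M)%nat -> 0 <= with_singleton M c d.
Proof. intros. rewrite with_singleton_sum. apply zsum_nosingle_ge0; lia. Qed.

Lemma with_singleton_ge M c d : (1 <= d <= M)%nat ->
  stirZ (M - 1) (c - 1) <= with_singleton M c d.
Proof.
  intros Hd. destruct d as [|d]; [lia|].
  rewrite with_singleton_sum, zsum_S, nosingle_0.
  pose proof (zsum_nosingle_ge0 M (c - 1) 1 d ltac:(lia)). lia.
Qed.

Lemma with_singleton_le M c d : (d <= M)%nat ->
  with_singleton M c d <= Z.of_nat d * stirZ (M - 1) (c - 1).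
Proof.
  intros. rewrite with_singleton_sum, <- zsum_const with (s := 0%nat).
  apply zsum_le. intros i Hi.
  pose proof (with_singleton_ge0 (M - 1) (c - 1) i ltac:(lia)).
  unfold with_singleton in *. lia.
Qed.

Lemma with_singleton_ge2 M c d : (d <= M)%nat ->
  2 * Z.of_nat d * stirZ (M - 1) (c - 1) - Z.of_nat d * (Z.of_nat d - 1) * stirZ (M - 2) (c - 2)
  <= 2 * with_singleton M c d.
Proof.
  intros Hd. rewrite with_singleton_sum.
  assert (Hsum : zsum 0 d (fun i => stirZ (M - 1) (c - 1) + - stirZ (M - 2) (c - 2) * Z.of_nat i)
                 <= zsum 0 d (fun i => nosingle (M - 1) (c - 1) i)).
  { apply zsum_le. intros i Hi.
    pose proof (with_singleton_le (M - 1) (c - 1) i ltac:(lia)) as Hle.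
    replace (M - 1 - 1)%nat with (M - 2)%nat in Hle by lia.
    replace (c - 1 - 1) with (c - 2) in Hle by lia.
    unfold with_singleton in Hle. lia. }
  rewrite zsum_add, zsum_const, zsum_scale in Hsum.
  pose proof (zsum_id d). nia.
Qed.

End SingletonCounts.

Fixpoint nsum (n : nat) (g : nat -> nat) : nat :=
  match n with O => 0 | S n' => nsum n' g + g n' end.

Lemma nsum_shift n g : nsum (S n) g = g 0 + nsum n (fun k => g (S k)).
Proof. induction n; cbn in *; [lia|]. rewrite IHn. lia. Qed.

Lemma nsum_ext n g h : (forall k, k < n -> g k = h k) -> nsum n g = nsum n h.
Proof. induction n; intros Hgh; cbn; [reflexivity|]. rewrite IHn, Hgh; auto. Qed.

Lemma nsum_le n g h : (forall k, k < n -> g k <= h k) -> nsum n g <= nsum n h.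
Proof.
  induction n; intros Hgh; cbn; [reflexivity|].
  specialize (IHn ltac:(intros; apply Hgh; lia)). specialize (Hgh n ltac:(lia)). lia.
Qed.

Lemma nsum_add n g h : nsum n (fun k => g k + h k) = nsum n g + nsum n h.
Proof. induction n; cbn; [reflexivity|]. rewrite IHn; lia. Qed.

Lemma nsum_scale n x g : nsum n (fun k => x * g k) = x * nsum n g.
Proof. induction n; cbn; [lia|]. rewrite IHn; lia. Qed.

Lemma nsum_term n g c : c < n -> g c <= nsum n g.
Proof.
  induction n; intros Hc; cbn; [lia|].
  destruct (Nat.eq_dec c n); [subst; lia|]. specialize (IHn ltac:(lia)). lia.
Qed.

Lemma nsum_indicator n c X : nsum n (fun k => if k =? c then X else 0) <= X.
Proof.
  induction n; cbn; [lia|].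
  destruct (Nat.eqb_spec n c); [|lia]. subst.
  assert (nsum c (fun k => if k =? c then X else 0) = 0); [|lia].
  rewrite (nsum_ext c _ (fun _ => 0)) by (intros k Hk; destruct (Nat.eqb_spec k c); lia).
  clear. induction c; cbn; lia.
Qed.

Lemma binom_theorem N x : nsum (S N) (fun k => binom N k * x ^ k) = (x + 1) ^ N.
Proof.
  revert x. induction N; intros x; [reflexivity|].
  rewrite nsum_shift.
  rewrite (nsum_ext (S N) _ (fun k => x * (binom N k * x ^ k) + binom N (S k) * x ^ S k))
    by (intros; cbn [binom]; rewrite Nat.pow_succ_r'; lia).
  rewrite nsum_add, nsum_scale, IHN.
  assert (Hfront := nsum_shift (S N) (fun k => binom N k * x ^ k)).
  change (nsum (S (S N)) (fun k => binom N k * x ^ k))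
    with (nsum (S N) (fun k => binom N k * x ^ k) + binom N (S N) * x ^ S N) in Hfront.
  rewrite IHN, binom_gt in Hfront by lia.
  replace (binom N 0) with 1 in Hfront by (destruct N; reflexivity).
  cbn [binom]. rewrite Nat.pow_succ_r'. lia.
Qed.

Lemma stirling2_gt n k : n < k -> stirling2 n k = 0.
Proof.
  revert k. induction n; intros k Hk; destruct k; cbn; try lia; auto.
  rewrite !IHn; lia.
Qed.

Lemma stirling2_diag n : stirling2 n n = 1.
Proof. induction n; cbn; [reflexivity|]. rewrite stirling2_gt by lia. lia. Qed.

Lemma stirling2_pos n k : 1 <= k <= n -> 1 <= stirling2 n k.
Proof.
  revert k. induction n; intros k Hk; [lia|].
  destruct k as [|[|k]]; [lia| |]; cbn [stirling2].
  - destruct n; [cbn; lia|]. specialize (IHn 1 ltac:(lia)). lia.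
  - specialize (IHn (S k) ltac:(lia)). lia.
Qed.

Lemma stirling2_mul_le n k : k * stirling2 n k <= stirling2 (S n) k.
Proof. destruct k; cbn [stirling2]; lia. Qed.

Lemma stirling2_pow_mul_le j n k : k ^ j * stirling2 n k <= stirling2 (n + j) k.
Proof.
  induction j; [rewrite Nat.add_0_r; cbn; lia|].
  rewrite Nat.pow_succ_r', <- plus_n_Sm.
  eapply Nat.le_trans; [|apply stirling2_mul_le]. nia.
Qed.

Lemma stirling2_lower m a : a <= m -> a ^ (m - a) <= stirling2 m a.
Proof.
  intros. pose proof (stirling2_pow_mul_le (m - a) a a) as H'.
  rewrite stirling2_diag, Nat.mul_1_r in H'. now replace (a + (m - a)) with m in H' by lia.
Qed.

Fixpoint ffact (c k : nat) : nat :=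
  match k with O => 1 | S k' => ffact c k' * (c - k') end.

Lemma ffact_gt k c : c < k -> ffact c k = 0.
Proof.
  induction k; intros; cbn; [lia|].
  destruct (Nat.eq_dec c k); [subst; rewrite Nat.sub_diag; lia|]. rewrite IHk by lia. lia.
Qed.

Lemma ffact_S_S k c : ffact (S c) (S k) = S c * ffact c k.
Proof. revert c. induction k; intros; cbn in *; [lia|]. rewrite IHk. cbn. lia. Qed.

Lemma ffact_diag c : ffact c c = fact c.
Proof. induction c; [reflexivity|]. rewrite ffact_S_S, IHc. reflexivity. Qed.

Lemma ffact_mul c k : c * ffact c k = ffact c (S k) + k * ffact c k.
Proof. cbn. destruct (le_lt_dec k c); [nia|]. rewrite ffact_gt by lia. lia. Qed.

Lemma ffact_S_le c k : k <> S c -> ffact (S c) k <= S c * ffact c k.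
Proof.
  intros. destruct k; [cbn; lia|].
  rewrite ffact_S_S. cbn. destruct (le_lt_dec k c); [nia|]. rewrite (ffact_gt k c) by lia. lia.
Qed.

(* Counting maps [N -> c] by the size of their image. *)
Lemma pow_ffact_stirling2 N c : c ^ N = nsum (S N) (fun k => ffact c k * stirling2 N k).
Proof.
  revert c. induction N; intros c; [reflexivity|].
  rewrite Nat.pow_succ_r', IHN, <- nsum_scale.
  rewrite (nsum_ext (S N) _
             (fun k => ffact c (S k) * stirling2 N k + k * ffact c k * stirling2 N k))
    by (intros; rewrite Nat.mul_assoc, ffact_mul; lia).
  rewrite nsum_add, (nsum_shift (S N) (fun k => ffact c k * stirling2 (S N) k)).
  rewrite (nsum_ext (S N) (fun k => ffact c (S k) * stirling2 (S N) (S k))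
             (fun k => ffact c (S k) * stirling2 N k + S k * ffact c (S k) * stirling2 N (S k)))
    by (intros; cbn [stirling2]; lia).
  rewrite nsum_add.
  assert (nsum (S N) (fun k => k * ffact c k * stirling2 N k)
          = nsum (S N) (fun k => S k * ffact c (S k) * stirling2 N (S k))).
  2:{ change (ffact c 0 * stirling2 (S N) 0) with 0. lia. }
  rewrite (nsum_shift N).
  change (nsum (S N) (fun k => S k * ffact c (S k) * stirling2 N (S k))) with
    (nsum N (fun k => S k * ffact c (S k) * stirling2 N (S k))
     + S N * ffact c (S N) * stirling2 N (S N)).
  rewrite (stirling2_gt N (S N)) by lia. cbn. lia.
Qed.

Lemma fact_mul_stirling2_le N c : fact c * stirling2 N c <= c ^ N.
Proof.
  destruct (le_lt_dec c N); [|rewrite stirling2_gt by lia; lia].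
  rewrite pow_ffact_stirling2, <- ffact_diag.
  apply (nsum_term (S N) (fun k => ffact c k * stirling2 N k) c). lia.
Qed.

Lemma pow_le_fact_mul_stirling2 N c : S c ^ N <= fact (S c) * stirling2 N (S c) + S c * c ^ N.
Proof.
  rewrite (pow_ffact_stirling2 N (S c)), (pow_ffact_stirling2 N c), <- nsum_scale.
  eapply Nat.le_trans with (nsum (S N) (fun k =>
    (if k =? S c then fact (S c) * stirling2 N (S c) else 0) + S c * (ffact c k * stirling2 N k))).
  - apply nsum_le. intros k _. destruct (Nat.eqb_spec k (S c)).
    + subst. rewrite ffact_diag. lia.
    + pose proof (ffact_S_le c k n). nia.
  - rewrite nsum_add.
    pose proof (nsum_indicator (S N) (S c) (fact (S c) * stirling2 N (S c))). lia.
Qed.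

Lemma stirling2_S_S_sum N c :
  stirling2 (S N) (S c) = nsum (S N) (fun k => binom N k * stirling2 k c).
Proof.
  revert c. induction N; intros c.
  { destruct c; [reflexivity|]. cbn. lia. }
  rewrite nsum_shift.
  rewrite (nsum_ext (S N) _
             (fun k => binom N k * stirling2 (S k) c + binom N (S k) * stirling2 (S k) c))
    by (intros; cbn [binom]; lia).
  rewrite nsum_add.
  assert (Hfront := nsum_shift (S N) (fun k => binom N k * stirling2 k c)).
  change (nsum (S (S N)) (fun k => binom N k * stirling2 k c))
    with (nsum (S N) (fun k => binom N k * stirling2 k c) + binom N (S N) * stirling2 (S N) c)
    in Hfront.
  rewrite binom_gt, <- IHN in Hfront by lia.
  replace (binom N 0) with 1 in Hfront by (destruct N; reflexivity).
  replace (binom (S N) 0) with 1 by reflexivity.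
  destruct c.
  - rewrite (nsum_ext (S N) (fun k => binom N k * stirling2 (S k) 0) (fun k => 0 * 0))
      by (intros; cbn; lia).
    rewrite nsum_scale. cbn [stirling2] in *. lia.
  - rewrite (nsum_ext (S N) (fun k => binom N k * stirling2 (S k) (S c))
               (fun k => S c * (binom N k * stirling2 k (S c)) + binom N k * stirling2 k c))
      by (intros; cbn [stirling2]; lia).
    rewrite nsum_add, nsum_scale, <- !IHN. cbn [stirling2] in *. lia.
Qed.

Lemma stirling2_S_S_le N c : c ^ N * stirling2 (S N) (S c) <= S c ^ N * stirling2 N c.
Proof.
  rewrite stirling2_S_S_sum, <- nsum_scale.
  eapply Nat.le_trans with (nsum (S N) (fun k => stirling2 N c * (binom N k * c ^ k))).
  - apply nsum_le. intros k Hk.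
    pose proof (stirling2_pow_mul_le (N - k) k c) as Hkc.
    replace (k + (N - k)) with N in Hkc by lia.
    assert (Hpow : c ^ N = c ^ k * c ^ (N - k)) by (rewrite <- Nat.pow_add_r; f_equal; lia).
    rewrite Hpow.
    replace (c ^ k * c ^ (N - k) * (binom N k * stirling2 k c))
      with (binom N k * c ^ k * (c ^ (N - k) * stirling2 k c)) by ring.
    replace (stirling2 N c * (binom N k * c ^ k)) with (binom N k * c ^ k * stirling2 N c) by ring.
    now apply Nat.mul_le_mono_l.
  - rewrite nsum_scale, binom_theorem, Nat.add_1_r. lia.
Qed.

Lemma stirling2_pow_le M c :
  stirling2 M c * S c ^ M <= c ^ M * (stirling2 (S M) (S c) + c * stirling2 M c).
Proof.
  pose proof (pow_le_fact_mul_stirling2 M c) as Hlow.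
  pose proof (fact_mul_stirling2_le M c) as Hup.
  change (fact (S c)) with (S c * fact c) in Hlow. cbn [stirling2].
  apply Nat.le_trans with (stirling2 M c * (S c * fact c * stirling2 M (S c) + S c * c ^ M)).
  - now apply Nat.mul_le_mono_l.
  - assert (S c * stirling2 M (S c) * (fact c * stirling2 M c) <= S c * stirling2 M (S c) * c ^ M)
      by now apply Nat.mul_le_mono_l.
    nia.
Qed.

Section PowerEstimates.
Local Open Scope R_scope.

Lemma bernoulli (h : R) n : 0 <= h -> 1 + INR n * h <= (1 + h) ^ n.
Proof.
  intros Hh. destruct (Req_dec h 0) as [->|]; [rewrite Rplus_0_r, pow1; lra|].
  apply poly. lra.
Qed.

Lemma Rle_div_of_mul c n d : 0 < d -> c * d <= n -> c <= n / d.
Proof.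
  intros Hd H. apply Rmult_le_reg_r with d; [exact Hd|].
  unfold Rdiv. rewrite Rmult_assoc, Rinv_l, Rmult_1_r; lra.
Qed.

Lemma INR_ge_2 a : (2 <= a)%nat -> 2 <= INR a.
Proof. intros. change 2 with (INR 2). now apply le_INR. Qed.

Lemma pow2_ge_quad b : 4 * INR b * (INR b - 1) <= 3 * 2 ^ b.
Proof.
  induction b as [|b IH]; [cbn; lra|].
  destruct (le_lt_dec b 2) as [Hb|Hb]; [destruct b as [|[|[|]]]; cbn; lra || lia|].
  assert (3 <= INR b) by (replace 3 with (INR 3) by (cbn; lra); apply le_INR; lia).
  rewrite S_INR. cbn [pow]. nra.
Qed.

Lemma pow2_ge_lin b : 17 * INR b <= 4 * 2 ^ b + 19.
Proof.
  induction b as [|b IH]; [cbn; lra|].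
  destruct (le_lt_dec b 3) as [Hb|Hb]; [destruct b as [|[|[|[|]]]]; cbn; lra || lia|].
  assert (16 <= 2 ^ b).
  { replace 16 with (2 ^ 4) by (cbn; lra). apply Rle_pow; [lra|lia]. }
  rewrite S_INR. cbn [pow]. lra.
Qed.

Lemma pow_three_halves_ge a : (4 <= a)%nat -> 16/10 * INR a <= 2 * (3/2) ^ a.
Proof.
  induction a as [|a IH]; intros Ha; [lia|].
  destruct (Nat.eq_dec a 3) as [->|]; [cbn; lra|].
  specialize (IH ltac:(lia)).
  assert (4 <= INR a) by (replace 4 with (INR 4) by (cbn; lra); apply le_INR; lia).
  rewrite S_INR. cbn [pow]. lra.
Qed.

Lemma power_ineq_wide (a b N : nat) : (2 <= b)%nat -> (2 * b <= a)%nat -> (a * b <= N)%nat ->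
  (INR b ^ N - (INR b - 1) ^ S N) * (INR a - 1) ^ N
  > 11/10 * INR a * ((INR b - 1) ^ N * INR a ^ N).
Proof.
  intros Hb Hab HN.
  assert (Hy : 2 <= INR b) by (apply INR_ge_2; lia).
  assert (Hx : 2 * INR b <= INR a)
    by (replace 2 with (INR 2) by (cbn; lra); rewrite <- mult_INR; apply le_INR; lia).
  set (x := INR a) in *. set (y := INR b) in *.
  set (w := y * (x - 1) / (x * (y - 1))).
  assert (Hw1 : w - 1 = (x - y) / (x * (y - 1))) by (unfold w; field; lra).
  assert (Hw : 1 <= w)
    by (enough (0 < (x - y) / (x * (y - 1))) by lra; apply Rdiv_lt_0_compat; nra).
  assert (Hwb : 3/2 <= w ^ (b - 1)).
  { replace w with (1 + (w - 1)) by ring. eapply Rle_trans; [|apply bernoulli; lra].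
    rewrite minus_INR, Hw1 by lia. fold y. cbn [INR].
    replace ((y - 1) * ((x - y) / (x * (y - 1)))) with ((x - y) / x) by (field; lra).
    enough (1/2 <= (x - y) / x) by lra. apply Rle_div_of_mul; lra. }
  assert (Hwa : 2 <= w ^ a).
  { replace w with (1 + (w - 1)) by ring. eapply Rle_trans; [|apply bernoulli; lra].
    fold x. rewrite Hw1.
    replace (x * ((x - y) / (x * (y - 1)))) with ((x - y) / (y - 1)) by (field; lra).
    enough (1 <= (x - y) / (y - 1)) by lra. apply Rle_div_of_mul; lra. }
  (* [w^N >= w^(a b) = (w^(b-1))^a w^a >= 2 (3/2)^a] *)
  assert (HwN : 16/10 * x <= w ^ N).
  { apply Rle_trans with ((3/2) ^ a * 2).
    { pose proof (pow_three_halves_ge a ltac:(lia)) as H32. fold x in H32. lra. }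
    apply Rle_trans with ((w ^ (b - 1)) ^ a * w ^ a).
    { apply Rmult_le_compat; try lra; [apply pow_le; lra|apply pow_incr; lra]. }
    rewrite <- pow_mult, <- pow_add. apply Rle_pow; [lra|nia]. }
  set (Z := x ^ N * (y - 1) ^ N).
  assert (HZ : 0 < Z) by (apply Rmult_lt_0_compat; apply pow_lt; lra).
  assert (Hlead : y ^ N * (x - 1) ^ N = w ^ N * Z).
  { unfold Z. rewrite <- !Rpow_mult_distr. f_equal. unfold w. field. lra. }
  assert (Htail : (y - 1) ^ S N * (x - 1) ^ N <= (y - 1) * Z).
  { unfold Z. cbn [pow]. rewrite Rmult_assoc. apply Rmult_le_compat_l; [lra|].
    rewrite Rmult_comm. apply Rmult_le_compat_r; [apply pow_le; lra|]. apply pow_incr; lra. }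
  replace ((y - 1) ^ N * x ^ N) with Z by (unfold Z; ring).
  nra.
Qed.

Lemma power_ineq_narrow (a b N : nat) :
  (2 <= b)%nat -> (b + 1 <= a)%nat -> (a < 2 * b)%nat -> (a * b <= N)%nat ->
  24/13 * INR b * ((INR b ^ N - (INR b - 1) ^ S N) * (INR a - 1) ^ N)
  > 22/10 * INR a * ((INR b - 1) ^ N * INR a ^ N).
Proof.
  intros Hb Hab Ha HN.
  assert (Hy : 2 <= INR b) by (apply INR_ge_2; lia).
  assert (Hx : INR b + 1 <= INR a) by (rewrite <- S_INR; apply le_INR; lia).
  assert (HNr : INR a * INR b <= INR N) by (rewrite <- mult_INR; apply le_INR; lia).
  pose proof (pow2_ge_quad b) as Hquad.
  set (x := INR a) in *. set (y := INR b) in *.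
  set (w := y * (x - 1) / (x * (y - 1))).
  assert (Hw1 : w - 1 = (x - y) / (x * (y - 1))) by (unfold w; field; lra).
  assert (HwN : 1 + y * (x - y) / (y - 1) <= w ^ N).
  { replace w with (1 + (w - 1)) by ring. eapply Rle_trans; [|apply bernoulli].
    2:{ rewrite Hw1. apply Rlt_le, Rdiv_lt_0_compat; nra. }
    rewrite Hw1. apply Rplus_le_compat_l.
    replace (y * (x - y) / (y - 1)) with (x * y * ((x - y) / (x * (y - 1)))) by (field; lra).
    apply Rmult_le_compat_r; [apply Rlt_le, Rdiv_lt_0_compat; nra|lra]. }
  set (v := x / (x - 1)).
  assert (Hv : 2 <= v ^ (a - 1)).
  { replace v with (1 + 1 / (x - 1)) by (unfold v; field; lra).
    eapply Rle_trans; [|apply bernoulli; apply Rlt_le, Rdiv_lt_0_compat; lra].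
    rewrite minus_INR by lia. fold x. cbn [INR]. right; field; lra. }
  assert (HvN : 2 ^ b <= v ^ N).
  { apply Rle_trans with (v ^ ((a - 1) * b)).
    - rewrite pow_mult. apply pow_incr; lra.
    - apply Rle_pow; [unfold v; apply Rle_div_of_mul; lra|nia]. }
  set (Z2 := (x * (y - 1)) ^ N). set (Z3 := ((x - 1) * (y - 1)) ^ N).
  assert (HZ3 : 0 < Z3) by (apply pow_lt; nra).
  assert (HZ2 : Z2 = v ^ N * Z3)
    by (unfold Z2, Z3, v; rewrite <- Rpow_mult_distr; f_equal; field; lra).
  assert (HZ2pos : 0 < Z2).
  { rewrite HZ2. apply Rmult_lt_0_compat; [apply pow_lt; unfold v; apply Rdiv_lt_0_compat|]; lra. }
  (* [Z2 >= 2^b Z3 >= 4/3 y (y-1) Z3] *)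
  assert (Htail : y * (y - 1) * Z3 <= 3/4 * Z2).
  { assert (0 < 2 ^ b) by (apply pow_lt; lra).
    assert (2 ^ b * Z3 <= Z2) by (rewrite HZ2; apply Rmult_le_compat_r; lra).
    nra. }
  assert (Hlead : y + (y + 1) * (x - y) <= y * w ^ N).
  { apply Rle_trans with (y * (1 + y * (x - y) / (y - 1))); [|apply Rmult_le_compat_l; lra].
    replace (y * (1 + y * (x - y) / (y - 1))) with (y + (y * y) * (x - y) / (y - 1))
      by (field; lra).
    apply Rplus_le_compat_l, Rle_div_of_mul; nra. }
  replace ((y ^ N - (y - 1) ^ S N) * (x - 1) ^ N) with (w ^ N * Z2 - (y - 1) * Z3).
  2:{ assert (w ^ N * Z2 = y ^ N * (x - 1) ^ N).
      { unfold Z2. rewrite <- !Rpow_mult_distr. f_equal. unfold w. field. lra. }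
      unfold Z3. rewrite Rpow_mult_distr. cbn [pow]. lra. }
  replace ((y - 1) ^ N * x ^ N) with Z2 by (unfold Z2; rewrite Rpow_mult_distr; ring).
  assert (22/10 * x < 24/13 * (y + (y + 1) * (x - y) - 3/4)) by nra.
  nra.
Qed.

Lemma power_ineq_narrow_second (a b N : nat) :
  (2 <= b)%nat -> (b + 1 <= a)%nat -> (a < 2 * b)%nat -> (a * b <= N)%nat ->
  13 * (INR b - 1) * (INR a - 2) ^ (N - 1) <= 2 * ((INR a - 1) ^ (N - 1) - (INR a - 2) ^ N).
Proof.
  intros Hb Hab Ha HN.
  assert (Hy : 2 <= INR b) by (apply INR_ge_2; lia).
  assert (Hx : INR b + 1 <= INR a) by (rewrite <- S_INR; apply le_INR; lia).
  assert (Hx2 : INR a + 1 <= 2 * INR b)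
    by (replace 2 with (INR 2) by (cbn; lra); rewrite <- S_INR, <- mult_INR; apply le_INR; lia).
  pose proof (pow2_ge_lin b) as Hlin.
  set (x := INR a) in *. set (y := INR b) in *.
  set (g := (x - 1) / (x - 2)).
  assert (Hg : 2 <= g ^ (a - 2)).
  { replace g with (1 + 1 / (x - 2)) by (unfold g; field; lra).
    eapply Rle_trans; [|apply bernoulli; apply Rlt_le, Rdiv_lt_0_compat; lra].
    rewrite minus_INR by lia. fold x. cbn [INR]. right; field; lra. }
  (* [N - 1 >= (a - 2)(b + 1)] uses [a < 2 b] *)
  assert (HgN : 2 * 2 ^ b <= g ^ (N - 1)).
  { apply Rle_trans with (g ^ ((a - 2) * (b + 1))).
    - rewrite pow_mult, pow_add. cbn [pow]. rewrite Rmult_1_r, (Rmult_comm 2).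
      apply Rmult_le_compat; try lra; apply pow_incr; lra.
    - apply Rle_pow; [unfold g; apply Rle_div_of_mul; lra|nia]. }
  assert (Hpow : (x - 1) ^ (N - 1) = g ^ (N - 1) * (x - 2) ^ (N - 1))
    by (rewrite <- Rpow_mult_distr; f_equal; unfold g; field; lra).
  replace ((x - 2) ^ N) with ((x - 2) * (x - 2) ^ (N - 1))
    by (rewrite tech_pow_Rmult; f_equal; nia).
  rewrite Hpow.
  assert (0 < (x - 2) ^ (N - 1)) by (apply pow_lt; lra).
  nra.
Qed.

End PowerEstimates.

Section StirlingRatios.
Local Open Scope R_scope.

Lemma stirling2_pow_le_R M c : (2 <= c)%nat ->
  INR (stirling2 M (c - 1)) * (INR c ^ M - (INR c - 1) ^ S M)
  <= (INR c - 1) ^ M * INR (stirling2 (S M) c).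
Proof.
  intros Hc. destruct c as [|c]; [lia|]. rewrite Nat.sub_succ, Nat.sub_0_r.
  pose proof (le_INR _ _ (stirling2_pow_le M c)) as H.
  rewrite !mult_INR, plus_INR, mult_INR, !pow_INR in H.
  rewrite S_INR in *. replace (INR c + 1 - 1) with (INR c) by ring. cbn [pow]. lra.
Qed.

Lemma stirling2_S_le_R N a : (1 <= a)%nat ->
  (INR a - 1) ^ N * INR (stirling2 (S N) a) <= INR a ^ N * INR (stirling2 N (a - 1)).
Proof.
  intros Ha. pose proof (le_INR _ _ (stirling2_S_S_le N (a - 1))) as H.
  replace (S (a - 1)) with a in H by lia.
  rewrite !mult_INR, !pow_INR, minus_INR in H by lia. exact H.
Qed.

Lemma stirling2_pred_second_le a b N :
  (2 <= b)%nat -> (b + 1 <= a)%nat -> (a < 2 * b)%nat -> (a * b <= N)%nat ->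
  13 * (INR b - 1) * INR (stirling2 (N - 1) (a - 2)) <= 2 * INR (stirling2 N (a - 1)).
Proof.
  intros Hb Hab Ha HN.
  pose proof (stirling2_pow_le_R (N - 1) (a - 1) ltac:(lia)) as Hst.
  replace (a - 1 - 1)%nat with (a - 2)%nat in Hst by lia.
  replace (S (N - 1)) with N in Hst by nia.
  rewrite minus_INR in Hst by lia. cbn [INR] in Hst.
  replace (INR a - 1 - 1) with (INR a - 2) in Hst by ring.
  pose proof (power_ineq_narrow_second a b N Hb Hab Ha HN) as Hpow.
  assert (Hx : 3 <= INR a) by (replace 3 with (INR 3) by (cbn; lra); apply le_INR; lia).
  assert (Hy : 2 <= INR b) by (apply INR_ge_2; lia).
  assert (0 < (INR a - 2) ^ (N - 1)) by (apply pow_lt; lra).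
  assert (0 <= INR (stirling2 (N - 1) (a - 2))) by apply pos_INR.
  assert (0 <= INR (stirling2 N (a - 1))) by apply pos_INR.
  set (D := (INR a - 1) ^ (N - 1) - (INR a - 2) ^ N) in *.
  assert (0 < D) by nra.
  apply Rmult_le_reg_r with D; [lra|]. nra.
Qed.

(* Used with [Bv, Sa, Sb, A1] = [S(N,b-1), S(N+1,a), S(N+1,b), S(N,a-1)]: the first two
   hypotheses bound [Bv/Sb] and [Sa/A1] by ratios of powers. *)
Lemma cross_ratio_lt (s c Bv Sa Sb A1 TL K PA QB XN : R) :
  0 <= s -> 0 < c -> 0 <= Bv -> 0 <= Sa -> 0 < Sb -> 0 < A1 -> 0 < PA -> 0 <= QB -> 0 <= XN ->
  Bv * K <= QB * Sb -> PA * Sa <= XN * A1 -> c * A1 <= TL ->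
  s * (QB * XN) < c * (K * PA) ->
  s * Bv * Sa < TL * Sb.
Proof.
  intros Hs Hc HBv HSa HSb HA1 HPA HQB HXN HB HA HTL Hpow.
  assert (HKPA : 0 < K * PA).
  { apply Rmult_lt_reg_l with c; [exact Hc|]. rewrite Rmult_0_r.
    eapply Rle_lt_trans; [|exact Hpow]. repeat apply Rmult_le_pos; lra. }
  assert (HK : 0 < K) by (apply Rmult_lt_reg_r with PA; lra).
  apply Rmult_lt_reg_r with (K * PA); [exact HKPA|].
  apply Rle_lt_trans with (s * (QB * Sb) * (XN * A1)).
  { replace (s * Bv * Sa * (K * PA)) with (s * (Bv * K) * (PA * Sa)) by ring.
    apply Rmult_le_compat; [repeat apply Rmult_le_pos; lra|apply Rmult_le_pos; lra| |exact HA].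
    apply Rmult_le_compat_l; lra. }
  apply Rlt_le_trans with (Sb * A1 * (c * (K * PA))).
  { replace (s * (QB * Sb) * (XN * A1)) with (Sb * A1 * (s * (QB * XN))) by ring.
    apply Rmult_lt_compat_l; nra. }
  replace (TL * Sb * (K * PA)) with (Sb * (K * PA) * TL) by ring.
  replace (Sb * A1 * (c * (K * PA))) with (Sb * (K * PA) * (c * A1)) by ring.
  apply Rmult_le_compat_l; nra.
Qed.

Lemma with_singleton_product_lt_R (a b N : nat) (TL TR m : R) :
  (2 <= b)%nat -> (b + 1 <= a)%nat -> (a * b <= N)%nat ->
  TR <= INR a * INR (stirling2 N (b - 1)) -> INR (stirling2 N (a - 1)) <= TL ->
  2 * INR b * INR (stirling2 N (a - 1)) - INR b * (INR b - 1) * INR (stirling2 (N - 1) (a - 2))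
  <= 2 * TL ->
  0 <= m -> 10 * m <= INR (stirling2 (S N) a) ->
  TR * (INR (stirling2 (S N) a) + m) < TL * INR (stirling2 (S N) b).
Proof.
  intros Hb Hab HN HTR HTL HTL2 Hm Hma.
  assert (Hy : 2 <= INR b) by (apply INR_ge_2; lia).
  assert (Hx : INR b + 1 <= INR a) by (rewrite <- S_INR; apply le_INR; lia).
  pose proof (stirling2_pow_le_R N b ltac:(lia)) as HB.
  pose proof (stirling2_S_le_R N a ltac:(lia)) as HA.
  assert (HA1 : 0 < INR (stirling2 N (a - 1))) by (apply lt_0_INR, stirling2_pos; nia).
  assert (HSb : 0 < INR (stirling2 (S N) b)) by (apply lt_0_INR, stirling2_pos; nia).
  assert (HA2 := pos_INR (stirling2 (N - 1) (a - 2))).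
  assert (HBv := pos_INR (stirling2 N (b - 1))). assert (HSa := pos_INR (stirling2 (S N) a)).
  set (A1 := INR (stirling2 N (a - 1))) in *. set (A2 := INR (stirling2 (N - 1) (a - 2))) in *.
  set (Bv := INR (stirling2 N (b - 1))) in *.
  set (Sa := INR (stirling2 (S N) a)) in *. set (Sb := INR (stirling2 (S N) b)) in *.
  set (K := INR b ^ N - (INR b - 1) ^ S N) in *.
  assert (HPA : 0 < (INR a - 1) ^ N) by (apply pow_lt; lra).
  assert (HQB : 0 <= (INR b - 1) ^ N) by (apply pow_le; lra).
  assert (HXN : 0 <= INR a ^ N) by (apply pow_le; lra).
  apply Rle_lt_trans with (11/10 * INR a * Bv * Sa).
  { assert (0 <= INR a * Bv * (Sa - 10 * m)) by (repeat apply Rmult_le_pos; lra).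
    apply Rle_trans with (INR a * Bv * (Sa + m)); [apply Rmult_le_compat_r|]; nra. }
  destruct (le_lt_dec (2 * b) a) as [Hwide|Hnarrow].
  - apply (cross_ratio_lt _ 1 _ _ _ A1 TL K ((INR a - 1) ^ N) ((INR b - 1) ^ N) (INR a ^ N));
      try lra.
    pose proof (power_ineq_wide a b N Hb Hwide HN) as Hpow. fold K in Hpow. lra.
  - pose proof (stirling2_pred_second_le a b N Hb Hab Hnarrow HN) as Hsecond.
    fold A1 A2 in Hsecond.
    apply (cross_ratio_lt _ (12/13 * INR b) _ _ _ A1 TL K ((INR a - 1) ^ N) ((INR b - 1) ^ N)
             (INR a ^ N)); try lra; [nra|].
    pose proof (power_ineq_narrow a b N Hb Hab Hnarrow HN) as Hpow. fold K in Hpow. lra.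
Qed.

End StirlingRatios.

Lemma pow3_ge_lin k : 4 <= k -> 10 * (2 * k - 1) <= 3 ^ k.
Proof.
  induction k as [|k IH]; intros Hk; [lia|].
  destruct (Nat.eq_dec k 3) as [->|]; [cbn; lia|].
  specialize (IH ltac:(lia)). rewrite Nat.pow_succ_r'. lia.
Qed.

Lemma stirling2_ge_10_mul M a b : 2 <= b -> b + 1 <= a -> a * b < M -> 10 * M <= stirling2 M a.
Proof.
  intros Hb Ha HM.
  pose proof (stirling2_lower M a ltac:(nia)) as Hlow.
  pose proof (pow3_ge_lin (M - a) ltac:(nia)).
  assert (3 ^ (M - a) <= a ^ (M - a)) by (apply Nat.pow_le_mono_l; lia).
  nia.
Qed.

Lemma with_singleton_product_lt (a b N t : nat) :
  2 <= b -> b + 1 <= a -> a * b <= N -> t <= S N ->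
  (with_singleton (S N) (Z.of_nat b) a * (stirZ (S N) (Z.of_nat a) + Z.of_nat t)
   < with_singleton (S N) (Z.of_nat a) b * (stirZ (S N) (Z.of_nat b) + Z.of_nat t))%Z.
Proof.
  intros Hb Hab HN Ht.
  pose proof (with_singleton_le (S N) (Z.of_nat b) a ltac:(nia)) as HTR.
  pose proof (with_singleton_ge (S N) (Z.of_nat a) b ltac:(nia)) as HTL.
  pose proof (with_singleton_ge2 (S N) (Z.of_nat a) b ltac:(nia)) as HTL2.
  replace (S N - 1) with N in * by lia. replace (S N - 2) with (N - 1) in * by lia.
  replace (Z.of_nat b - 1)%Z with (Z.of_nat (b - 1)) in * by lia.
  replace (Z.of_nat a - 1)%Z with (Z.of_nat (a - 1)) in * by lia.
  replace (Z.of_nat a - 2)%Z with (Z.of_nat (a - 2)) in * by lia.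
  rewrite !stirZ_of_nat in *.
  assert (HTL0 := with_singleton_ge0 (S N) (Z.of_nat a) b ltac:(lia)).
  enough (with_singleton (S N) (Z.of_nat b) a * (Z.of_nat (stirling2 (S N) a) + Z.of_nat t)
          < with_singleton (S N) (Z.of_nat a) b * Z.of_nat (stirling2 (S N) b))%Z by nia.
  apply lt_IZR. rewrite !mult_IZR, plus_IZR, <- !INR_IZR_INZ.
  apply (with_singleton_product_lt_R a b N); try lia.
  - apply IZR_le in HTR. rewrite mult_IZR, <- !INR_IZR_INZ in HTR. exact HTR.
  - apply IZR_le in HTL. rewrite <- INR_IZR_INZ in HTL. exact HTL.
  - apply IZR_le in HTL2.
    rewrite !minus_IZR, !mult_IZR, <- !INR_IZR_INZ, minus_INR in HTL2 by lia.
    cbn [INR] in HTL2. lra.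
  - apply pos_INR.
  - pose proof (le_INR _ _ (stirling2_ge_10_mul (S N) a b Hb Hab ltac:(lia))) as H10.
    rewrite mult_INR in H10. replace (INR 10) with 10%R in H10 by (cbn; lra).
    apply le_INR in Ht. lra.
Qed.

Lemma r1_with_singleton n k l t : t <= k -> t <= l -> l < n ->
  r1 n k l t
  = (with_singleton (n - t) (Z.of_nat (k - t)) (l - t)
     * (stirZ (n - t) (Z.of_nat (l - t)) + Z.of_nat t))%Z.
Proof.
  intros Hk Hl Hn. unfold r1.
  change (fold_right Z.add 0%Z _)
    with (binom_alt_sum (l - t) (fun j => S2 (n - t - j) (Z.of_nat k - Z.of_nat t - Z.of_nat j))).
  rewrite binom_alt_sum_eq, !S2_stirZ, !Nat2Z.inj_sub by lia.
  unfold with_singleton, nosingle. rewrite Nat.sub_0_r, Z.sub_0_r. do 2 f_equal.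
  apply alt_sum_ext. intros. apply S2_stirZ. lia.
Qed.

Lemma L_ge_succ k t : t < k -> (INR t + 1 <= L k t)%R.
Proof.
  intros Htk. unfold L, log2R. rewrite plus_IZR, <- INR_IZR_INZ. change (IZR 1) with 1%R.
  assert (Hk : (0 < IZR (Z.of_nat k - Z.of_nat t + 1))%R) by (apply IZR_lt; lia).
  assert (Hx : (1 <= IZR ((Z.of_nat t + 1) * (Z.of_nat k - Z.of_nat t + 1)))%R)
    by (apply IZR_le; nia).
  set (x := IZR ((Z.of_nat t + 1) * (Z.of_nat k - Z.of_nat t + 1))) in *.
  assert (Hln : (0 <= ln x)%R).
  { rewrite <- ln_1. destruct (Rle_lt_or_eq_dec _ _ Hx) as [Hlt| <-]; [|lra].
    left. apply ln_increasing; lra. }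
  assert (Hln2 : (0 < ln 2)%R) by (rewrite <- ln_1; apply ln_increasing; lra).
  assert (0 <= ln x / ln 2)%R by (apply Rmult_le_pos; [lra|left; apply Rinv_0_lt_compat; lra]).
  nra.
Qed.

Theorem mainTheorem19 (n k l t : nat) :
  (k > l)%nat -> (l >= t + 2)%nat ->
  (INR n >= 2 * L k t)%R ->
  (n >= t + 1 + (k - t) * (l - t))%nat ->
  (r1 n k l t > r1 n l k t)%Z.
Proof.
  intros Hkl Hlt HL Hn.
  (* The bound on [n] in terms of [L k t] is only needed in the weak form [n - t > t]. *)
  assert (Htn : 2 * t + 2 <= n).
  { pose proof (L_ge_succ k t ltac:(lia)).
    apply INR_le. rewrite plus_INR, mult_INR. cbn [INR]. lra. }
  rewrite !r1_with_singleton by nia.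
  replace (n - t) with (S (n - t - 1)) by lia.
  apply Z.lt_gt, with_singleton_product_lt; nia.
Qed.
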